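(* Let $k\geq 3$, $A=\{0,1,\dots,k-1\}$ and $n=k-1$. Let $T\colon A^{n^2}\to A$ be the $n^2$-ary operation whose arguments are written as $x_{1,1},\dots,x_{1,n},x_{2,1},\dots,x_{2,n},\dots,x_{n,1},\dots,x_{n,n}$ (row by row), defined by $T(x_{1,1},\dots,x_{n,n})=1$ if $x_{i,j}=i$ for all $i,j\in\{1,\dots,n\}$ or $x_{i,j}=j$ for all $i,j\in\{1,\dots,n\}$, and $T(x_{1,1},\dots,x_{n,n})=0$ otherwise. Let $f\colon A^n\to A$ be given by $f(\mathbf{x})=1$ if $\mathbf{x}\in\{(1,2,\dots,n),(n,n-1,\dots,1)\}$ and $f(\mathbf{x})=0$ otherwise. For variables $x_{i,j}$ ($1\leq i,j\leq n$) write $\swarrow = (x_{1,n},x_{2,n-1},\dots,x_{n-1,2},x_{n,1})$, $\nearrow=(x_{n,1},x_{n-1,2},\dots,x_{2,n-1},x_{1,n})$, and for $1\leq i\leq n$: $\rightarrow_i=(x_{i,1},\dots,x_{i,n})$, $\leftarrow_i=(x_{i,n},\dots,x_{i,1})$, $\downarrow_i=(x_{1,i},\dots,x_{n,i})$, $\uparrow_i=(x_{n,i},\dots,x_{1,i})$; an expression $T(\mathbf{s}_1,\dots,\mathbf{s}_n)$ with $n$-tuples $\mathbf{s}_i$ means $T$ applied to the concatenation of these tuples. Then \[ \{(\swarrow,y)\in A^k : f(\swarrow)=y\} =\Bigl\{(\swarrow,y)\in A^k : \exists\, (x_{i,j})_{1\leq i,j\leq n,\ i+j\neq k}\in A\colon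 T(\rightarrow_1,\dots,\rightarrow_n)=y,\ T(\swarrow,\dots,\swarrow)=T(\rightarrow_1,\leftarrow_2,\dots,\leftarrow_n),\ T(\nearrow,\dots,\nearrow)=T(\downarrow_1,\uparrow_2,\dots,\uparrow_n)\Bigr\}, \] and this set also equals \[ \Bigl\{(\swarrow,y)\in A^k : \exists\, (x_{i,j})_{i+j\neq k}\in A\ \exists u,v\in A\colon T(\rightarrow_1,\dots,\rightarrow_n)=y\wedge T(\swarrow,\dots,\swarrow)=u\wedge T(\rightarrow_1,\leftarrow_2,\dots,\leftarrow_n)=u\wedge T(\nearrow,\dots,\nearrow)=v\wedge T(\downarrow_1,\uparrow_2,\dots,\uparrow_n)=v\Bigr\}. \] In particular the graph of $f$ is primitive positively definable from the graph of $T$.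
   Context: Here $(\swarrow,y)$ denotes the $k$-tuple $(x_{1,n},x_{2,n-1},\dots,x_{n,1},y)$; the variables $x_{i,j}$ with $i+j=k$ (the entries of $\swarrow$) are free and all other $x_{i,j}$ are existentially quantified. *)

From mathcomp Require Import all_boot.
Set Implicit Arguments. Unset Strict Implicit. Unset Printing Implicit Defensive.

(* Convention: k = n.+1, A = 'I_n.+1 = {0,...,k-1}; indices 1..n of the paper
   are represented 0-based by 'I_n (paper index i+1 <-> ordinal i). *)

(* An n^2-ary argument tuple, written row by row: M i j = x_{i+1,j+1}. *)
Definition sq_args (n : nat) := 'I_n -> 'I_n -> 'I_n.+1.

Definition T (n : nat) (M : sq_args n) : 'I_n.+1 :=
  if [forall i : 'I_n, forall j : 'I_n, val (M i j) == i.+1]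
     || [forall i : 'I_n, forall j : 'I_n, val (M i j) == j.+1]
  then inord 1 else ord0.

Definition f (n : nat) (s : 'I_n -> 'I_n.+1) : 'I_n.+1 :=
  if [forall i : 'I_n, val (s i) == i.+1] || [forall i : 'I_n, val (s i) == n - i]
  then inord 1 else ord0.

Section Paths.
Variables (n : nat) (x : 'I_n -> 'I_n -> 'I_n.+1).
Definition sw (j : 'I_n) : 'I_n.+1 := x j (rev_ord j).
Definition ne (j : 'I_n) : 'I_n.+1 := x (rev_ord j) j.
Definition rows_args : sq_args n := fun i j => x i j.
Definition sw_args : sq_args n := fun _ j => sw j.
Definition ne_args : sq_args n := fun _ j => ne j.
Definition snake_rows_args : sq_args n :=
  fun i j => if val i == 0 then x i j else x i (rev_ord j).
Definition snake_cols_args : sq_args n :=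
  fun i j => if val i == 0 then x j i else x (rev_ord j) i.
End Paths.

Set Warnings "-notation-overridden".
From mathcomp Require Import all_boot zify.

Set Implicit Arguments. Unset Strict Implicit. Unset Printing Implicit Defensive.

(* T is 1 exactly on the two index tables (every entry equal to its row
   index, resp. to its column index), so each equation T(P) = T(Q) says that
   P is an index table iff Q is.  A table with equal rows is an index table
   iff its row is (1,...,n), so T(sw,...,sw) = 1 iff the antidiagonal is
   ascending.  The snake (->_1, <-_2, ..., <-_n) has x_{1,n} = sw_1 at
   position (1,n); when sw_1 = 1 <> n it can only be the row-index table,
   which forces x itself to be the row-index table, whence T(->_1,...) = 1.
   The third equation is the second one for the transposed array and treats
   a descending antidiagonal in the same way.  Conversely the two index
   tables, or the antidiagonal padded with zeros, witness the existential. *)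

Section IndexTables.
Variable n : nat.
Implicit Types (M x : sq_args n) (s : 'I_n -> 'I_n.+1).

Definition row_indexed M := [forall i, forall j, val (M i j) == i.+1].
Definition col_indexed M := [forall i, forall j, val (M i j) == j.+1].
Definition indexed M := row_indexed M || col_indexed M.

Definition ascending s := [forall i, val (s i) == i.+1].
Definition descending s := [forall i, val (s i) == n - i].

Definition tr_args x : sq_args n := fun i j => x j i.

Definition row_index_args : sq_args n := fun i _ => inord i.+1.
Definition col_index_args : sq_args n := fun _ j => inord j.+1.

Lemma TE M : T M = if indexed M then inord 1 else ord0.
Proof. by []. Qed.

Lemma fE s : f s = if ascending s || descending s then inord 1 else ord0.
Proof. by []. Qed.

Lemma row_indexedP M : reflect (forall i j, val (M i j) = i.+1) (row_indexed M).
Proof.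
apply: (iffP forallP) => [H i | H i]; first exact/eqfunP.
by apply/eqfunP => j; apply: H.
Qed.

Lemma col_indexedP M : reflect (forall i j, val (M i j) = j.+1) (col_indexed M).
Proof.
apply: (iffP forallP) => [H i | H i]; first exact/eqfunP.
by apply/eqfunP => j; apply: H.
Qed.

Lemma ascendingP s : reflect (forall i, val (s i) = i.+1) (ascending s).
Proof. exact: eqfunP. Qed.

Lemma descendingP s : reflect (forall i, val (s i) = n - i) (descending s).
Proof. exact: eqfunP. Qed.

Lemma ascending_rev s : ascending (s \o @rev_ord _) = descending s.
Proof.
apply/ascendingP/descendingP => H i; have := ltn_ord i.
  by have := H (rev_ord i); rewrite /= rev_ordK => ->; lia.
by rewrite /= H /=; lia.
Qed.

Lemma eq_ascending s s' : s =1 s' -> ascending s = ascending s'.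
Proof. by move=> e; apply: eq_forallb => i; rewrite e. Qed.

Lemma eq_descending s s' : s =1 s' -> descending s = descending s'.
Proof. by move=> e; rewrite -!ascending_rev; apply: eq_ascending => i /=. Qed.

Lemma sw_tr x : sw (tr_args x) =1 sw x \o @rev_ord _.
Proof. by move=> j; rewrite /sw /tr_args /= rev_ordK. Qed.

Lemma ne_args_tr x : ne_args x = sw_args (tr_args x).
Proof. by []. Qed.

Lemma snake_cols_args_tr x : snake_cols_args x = snake_rows_args (tr_args x).
Proof. by []. Qed.

Lemma row_indexed_tr x : row_indexed (tr_args x) = col_indexed x.
Proof. by apply/row_indexedP/col_indexedP => H i j; apply: H. Qed.

Lemma row_indexed_snake_rows x :
  row_indexed (snake_rows_args x) = row_indexed x.
Proof.
apply/row_indexedP/row_indexedP => H i j.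
  have := H i (if val i == 0 then j else rev_ord j); rewrite /snake_rows_args.
  by case: (val i == 0); rewrite ?rev_ordK.
by rewrite /snake_rows_args; case: ifP => _; apply: H.
Qed.

Lemma row_indexed_ascending x : row_indexed x -> ascending (sw x).
Proof. by move/row_indexedP => H; apply/ascendingP => i; apply: H. Qed.

Lemma col_indexed_descending x : col_indexed x -> descending (sw x).
Proof.
rewrite -row_indexed_tr -ascending_rev => /row_indexed_ascending.
by rewrite (eq_ascending (sw_tr x)).
Qed.

Lemma row_indexed_row_index : row_indexed row_index_args.
Proof.
by apply/row_indexedP => i j; rewrite /row_index_args /= inordK // ltnS ltn_ord.
Qed.

End IndexTables.

Arguments row_index_args {n}.
Arguments col_index_args {n}.

Lemma indexed_corner n (M : sq_args n.+1) : indexed M -> val (M ord0 ord0) = 1.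
Proof. by case/orP => [/row_indexedP | /col_indexedP] ->. Qed.

Lemma col_indexed_snake_rows n (x : sq_args n.+1) :
  col_indexed (snake_rows_args x) -> val (sw x ord0) = n.+1.
Proof. by move/col_indexedP/(_ ord0 (rev_ord ord0)) => /= ->; rewrite subn1. Qed.

Section AtLeastTwo.
Variable m : nat.
Local Notation n := m.+2.
Implicit Types (M x : sq_args n) (d : 'I_n -> 'I_n.+1).

Definition sw_snake_agree x := indexed (sw_args x) = indexed (snake_rows_args x).

Definition antidiag_args d : sq_args n :=
  fun i j => if j == rev_ord i then d i else ord0.

Lemma eq_T_indexed M M' : T M = T M' <-> indexed M = indexed M'.
Proof.
rewrite !TE; split => [|-> //].
by case: (indexed M) (indexed M') => [] [] // /(congr1 val); rewrite /= inordK.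
Qed.

Lemma indexed_sw_args x : indexed (sw_args x) = ascending (sw x).
Proof.
rewrite /indexed; have -> : row_indexed (sw_args x) = false.
  apply/row_indexedP => H; have := H ord0 ord0.
  by rewrite /sw_args (H (inord 1) ord0) inordK.
by apply/col_indexedP/ascendingP => H i; [exact: H ord0 i | move=> j; exact: H j].
Qed.

Lemma ascending_snake_rows x :
  indexed (snake_rows_args x) -> ascending (sw x) -> row_indexed x.
Proof.
case/orP => [|/col_indexed_snake_rows sw0 /ascendingP/(_ ord0)].
  by rewrite row_indexed_snake_rows.
by rewrite sw0.
Qed.

Lemma indexed_agree x : sw_snake_agree x -> sw_snake_agree (tr_args x) ->
  indexed x = ascending (sw x) || descending (sw x).
Proof.
rewrite /sw_snake_agree => agree agree_tr; apply/idP/idP.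
  by case/orP => [/row_indexed_ascending | /col_indexed_descending] ->; rewrite ?orbT.
have asc_tr : ascending (sw (tr_args x)) = descending (sw x).
  by rewrite (eq_ascending (sw_tr x)) ascending_rev.
case/orP => [asc | desc]; apply/orP; [left | right].
  by apply: (ascending_snake_rows _ asc); rewrite -agree indexed_sw_args.
rewrite -row_indexed_tr; apply: ascending_snake_rows; last by rewrite asc_tr.
by rewrite -agree_tr indexed_sw_args asc_tr.
Qed.

Lemma agree_row_index : sw_snake_agree row_index_args.
Proof.
rewrite /sw_snake_agree indexed_sw_args /indexed row_indexed_snake_rows.
by rewrite row_indexed_ascending row_indexed_row_index.
Qed.

Lemma agree_col_index : sw_snake_agree col_index_args.
Proof.
rewrite /sw_snake_agree indexed_sw_args.
have -> : ascending (sw (col_index_args : sq_args n)) = false.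
  apply/negbTE/negP => /ascendingP/(_ ord0).
  by rewrite /sw /col_index_args /= inordK ?subn1.
apply: esym; apply/norP; split.
  rewrite row_indexed_snake_rows; apply/negP => /row_indexedP/(_ ord0 (inord 1)).
  by rewrite /col_index_args /= !inordK.
apply/negP => /col_indexedP/(_ (inord 1) ord0).
by rewrite /snake_rows_args /col_index_args /= !inordK.
Qed.

Lemma agree_corner0 x :
  val (x ord0 ord0) = 0 -> ~~ ascending (sw x) -> sw_snake_agree x.
Proof.
move=> x00 /negbTE asc; rewrite /sw_snake_agree indexed_sw_args asc.
by apply/esym/negbTE/negP => /indexed_corner; rewrite /snake_rows_args /= x00.
Qed.

Lemma graph_f_witness d : exists x, [/\ sw x =1 d, T (rows_args x) = f d,
  sw_snake_agree x & sw_snake_agree (tr_args x)].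
Proof.
rewrite fE; case asc: (ascending d).
  exists row_index_args; split; [|by rewrite TE /indexed row_indexed_row_index
    | exact: agree_row_index | exact: agree_col_index].
  move=> i; apply: val_inj; have /ascendingP -> := asc.
  by rewrite /= inordK // ltnS ltn_ord.
case desc: (descending d).
  exists col_index_args; split; [| by rewrite TE /indexed
    -(row_indexed_tr col_index_args) row_indexed_row_index orbT
    | exact: agree_col_index | exact: agree_row_index].
  move=> i; apply: val_inj; have /descendingP -> := desc.
  by rewrite /= inordK /=; have := ltn_ord i; lia.
have sw_antidiag : sw (antidiag_args d) =1 d.
  by move=> i; rewrite /sw /antidiag_args eqxx.
have corner0 : val (antidiag_args d ord0 ord0) = 0.
  by rewrite /antidiag_args; case: eqP => // /(congr1 val).
exists (antidiag_args d); split => //.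
- by rewrite TE; case: ifP => // /indexed_corner; rewrite corner0.
- by apply: agree_corner0; rewrite // (eq_ascending sw_antidiag) asc.
- apply: agree_corner0 => //.
  by rewrite (eq_ascending (sw_tr _)) ascending_rev (eq_descending sw_antidiag) desc.
Qed.

Lemma graph_f_pp d y : f d = y <->
  exists x : 'I_n -> 'I_n -> 'I_n.+1,
    (forall i : 'I_n, x i (rev_ord i) = d i) /\
    T (rows_args x) = y /\
    T (sw_args x) = T (snake_rows_args x) /\
    T (ne_args x) = T (snake_cols_args x).
Proof.
have agree_trE x :
    T (ne_args x) = T (snake_cols_args x) <-> sw_snake_agree (tr_args x).
  by rewrite ne_args_tr snake_cols_args_tr; apply: eq_T_indexed.
split => [<- | [x [xd [<- [/eq_T_indexed agree /agree_trE agree_tr]]]]].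
  have [x [xd Tx agree agree_tr]] := graph_f_witness d.
  by exists x; do !split => //; [apply/eq_T_indexed | apply/agree_trE].
rewrite fE TE (indexed_agree agree agree_tr).
by rewrite (eq_ascending xd) (eq_descending xd).
Qed.

End AtLeastTwo.

Theorem theorem3p13 (n : nat) (hn : 2 <= n) :
  forall (d : 'I_n -> 'I_n.+1) (y : 'I_n.+1),
    (f d = y <->
     exists x : 'I_n -> 'I_n -> 'I_n.+1,
       (forall i : 'I_n, x i (rev_ord i) = d i) /\
       T (rows_args x) = y /\
       T (sw_args x) = T (snake_rows_args x) /\
       T (ne_args x) = T (snake_cols_args x))
    /\
    (f d = y <->
     exists x : 'I_n -> 'I_n -> 'I_n.+1,
       (forall i : 'I_n, x i (rev_ord i) = d i) /\
       exists u v : 'I_n.+1,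
         [/\ T (rows_args x) = y, T (sw_args x) = u, T (snake_rows_args x) = u,
             T (ne_args x) = v & T (snake_cols_args x) = v]).
Proof.
case: n hn => [|[|m]] // _ d y.
split; rewrite graph_f_pp //; split.
  case=> x [xd [Tx [Tsw Tne]]]; exists x; split => //.
  by exists (T (sw_args x)), (T (ne_args x)).
by case=> x [xd [u [v [Tx <- Tsnr <- Tsnc]]]]; exists x; rewrite Tsnr Tsnc.
Qed.
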